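(* Let $n \ge 1$ and let $p_0, p_1, \ldots, p_n \in \mathbb{Z}^2$ be integer points with $p_n = p_0$, forming the closed polygon $P = (p_0, p_1, \ldots, p_n)$ (not necessarily simple). Then $$\mathrm{Area}(P) = \mathrm{Welp}(P), \qquad\text{where } \mathrm{Welp}(P) := \sum_{q \in \mathbb{Z}^2} \mathrm{Dang}(P - q).$$
   Context: Work over an ordered field $\mathbb{K}$ containing $\mathbb{Q}$ (e.g. $\mathbb{Q}$ or $\mathbb{R}$), viewing $\mathbb{Z}^2 \subset \mathbb{K}^2$. For $u = (u_1,u_2), v = (v_1,v_2) \in \mathbb{K}^2$ define $\mathrm{area}(u,v) := \tfrac12 (u_1 - v_1)(u_2 + v_2)$, and for a polygon $P = (p_0, \ldots, p_n)$ define $\mathrm{Area}(P) := \sum_{i=1}^n \mathrm{area}(p_{i-1}, p_i)$. Let $\operatorname{sign} \colon \mathbb{K} \to \{-1,0,1\}$ be the sign function. The discrete angle measure is $$\mathrm{dang}(u,v) := \tfrac14 \,\bigl|\operatorname{sign} u_1 - \operatorname{sign} v_1\bigr| \cdot \operatorname{sign}(u_1 v_2 - u_2 v_1),$$ and for a polygon $P = (p_0,\ldots,p_n)$ we set $\mathrm{Dang}(P) := \sum_{i=1}^n \mathrm{dang}(p_{i-1}, p_i)$. For $q \in \mathbb{K}^2$, $P - q := (p_0 - q, \ldots, p_n - q)$. (Only finitely many $q \in \mathbb{Z}^2$ give $\mathrm{Dang}(P-q) \ne 0$, namely those in a sufficiently large box containing all vertices, so the sum defining $\mathrm{Welp}(P)$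 is finite.) *)

From mathcomp Require Import all_boot all_order all_algebra.
Set Implicit Arguments. Unset Strict Implicit. Unset Printing Implicit Defensive.
Import Order.TTheory GRing.Theory Num.Theory.
Local Open Scope ring_scope.

Section Defs.
Variable K : realFieldType.

Definition area (u v : K * K) : K := 2^-1 * (u.1 - v.1) * (u.2 + v.2).

Definition dang (u v : K * K) : K :=
  4^-1 * `|Num.sg u.1 - Num.sg v.1| * Num.sg (u.1 * v.2 - u.2 * v.1).

Definition toK (z : int * int) : K * K := (z.1%:~R, z.2%:~R).

Definition Area (p : nat -> int * int) (n : nat) : K :=
  \sum_(1 <= i < n.+1) area (toK (p i.-1)) (toK (p i)).

Definition subZ2 (a q : int * int) : int * int := (a.1 - q.1, a.2 - q.2).

Definition Dang (p : nat -> int * int) (n : nat) (q : int * int) : K :=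
  \sum_(1 <= i < n.+1) dang (toK (subZ2 (p i.-1) q)) (toK (subZ2 (p i) q)).
End Defs.

From mathcomp Require Import all_boot all_order all_algebra.
From mathcomp Require Import zify ring lra.
Import Order.TTheory GRing.Theory Num.Theory.
Set Implicit Arguments. Unset Strict Implicit. Unset Printing Implicit Defensive.
Local Open Scope ring_scope.

(* Both sides are sums over the edges [a, b] of the polygon, so it suffices to sum
   [f q := dang (a - q) (b - q)] over a square box [[-M, M]^2] that is large
   compared to the polygon.  In a column [c] missing [[a.1, b.1]] the summand [f]
   vanishes, and far below (above) the edge it equals [-1/4] ([+1/4]) times the
   jump [sg (b.1 - c) - sg (a.1 - c)].  The point reflection [q |-> a + b - q]
   negates [f]; as the column sums live in [[-R, R]], twice the box sum is a sum
   over columns of differences of two vertical windows offset by [a.2 + b.2], which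
   only see the constant tails: it is [(a.1 - b.1) (a.2 + b.2) = 2 area a b].
   Outside a box containing the polygon every edge term is zero or a multiple of a
   jump, and the jumps telescope to zero along the closed polygon, so
   [q |-> Dang (P - q)] has finite support. *)

Lemma big_uniq_supp_eq (V : nmodType) (I : eqType) (r s : seq I) (F : I -> V) :
  uniq r -> uniq s ->
  (forall i, i \notin r -> F i = 0) -> (forall i, i \notin s -> F i = 0) ->
  \sum_(i <- r) F i = \sum_(i <- s) F i.
Proof.
move=> ur us Fr Fs; apply: perm_big_supp; apply: uniq_perm; rewrite ?filter_uniq //.
move=> i; rewrite !mem_filter; case: eqVneq => //= Fi.
by rewrite (contra_neqT (Fr i) Fi) (contra_neqT (Fs i) Fi).
Qed.

Definition sym_range (M : nat) : seq int :=
  [seq - M%:Z + i%:Z | i <- iota 0 (2 * M).+1].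

Definition box (M : nat) : seq (int * int) :=
  [seq (x, y) | x <- sym_range M, y <- sym_range M].

Lemma mem_sym_range M x : (x \in sym_range M) = (`|x| <= M%:Z).
Proof.
apply/mapP/idP => [[i]|xM]; first by rewrite mem_iota => ? ->; lia.
by exists (absz (x + M%:Z)); [rewrite mem_iota|]; lia.
Qed.

Lemma mem_box M q : (q \in box M) = (`|q.1| <= M%:Z) && (`|q.2| <= M%:Z).
Proof.
case: q => x y; rewrite -!mem_sym_range.
apply/allpairsP/andP => [[[x' y'] /= [? ? [-> ->]]]|[]] //.
by exists (x, y).
Qed.

Lemma box_uniq M : uniq (box M).
Proof.
have uT : uniq (sym_range M) by rewrite map_inj_uniq ?iota_uniq // => i j /addrI [].
by apply: allpairs_uniq => // -[x y] [x' y'] _ _ [-> ->].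
Qed.

Section WindowSum.
Variable V : zmodType.
Implicit Types (G : int -> V) (lo : int) (N : nat).

Definition wsum G lo N : V := \sum_(i < N) G (lo + i%:Z).

Lemma wsum_cat G lo N d : wsum G lo (N + d) = wsum G lo N + wsum G (lo + N%:Z) d.
Proof.
rewrite /wsum big_split_ord; congr (_ + _).
by apply: eq_bigr => i _; rewrite PoszD addrA.
Qed.

Lemma wsum_const G lo N c :
  (forall i : nat, (i < N)%N -> G (lo + i%:Z) = c) -> wsum G lo N = c *+ N.
Proof.
by move=> Gc; rewrite /wsum (eq_bigr (fun _ => c)) ?sumr_const ?card_ord // => i _; apply: Gc.
Qed.

Lemma eq_wsum G G' lo N : G =1 G' -> wsum G lo N = wsum G' lo N.
Proof. by move=> GG'; apply: eq_bigr => i _. Qed.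

Lemma wsumN G lo N : wsum (fun t => - G t) lo N = - wsum G lo N.
Proof. exact: sumrN. Qed.

Lemma wsumD G G' lo N : wsum (fun t => G t + G' t) lo N = wsum G lo N + wsum G' lo N.
Proof. exact: big_split. Qed.

Lemma wsum_rev G r lo N : wsum (fun c => G (r - c)) lo N.+1 = wsum G (r - lo - N%:Z) N.+1.
Proof.
rewrite /wsum (reindex_inj rev_ord_inj); apply: eq_bigr => i _ /=; congr G.
by have := ltn_ord i; rewrite subSS; lia.
Qed.

Lemma wsum_translate G k lo N : wsum (fun c => G (c + k)) lo N = wsum G (lo + k) N.
Proof. by apply: eq_bigr => i _; rewrite addrAC. Qed.

Section StepFunction.
Variables (G : int -> V) (L U : int) (al be : V).
Hypothesis G_left : forall t, t < L -> G t = al.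
Hypothesis G_right : forall t, U <= t -> G t = be.

Let wsum_step_shiftn lo N (d : nat) : lo + d%:Z <= L -> U <= lo + N%:Z ->
  wsum G (lo + d%:Z) N - wsum G lo N = (be - al) *+ d.
Proof.
move=> dL UN.
have -> : wsum G (lo + d%:Z) N - wsum G lo N = wsum G (lo + N%:Z) d - wsum G lo d.
  apply/eqP; rewrite subr_eq addrAC eq_sym subr_eq; apply/eqP.
  by rewrite addrC [RHS]addrC -!wsum_cat addnC.
rewrite (@wsum_const _ _ _ be) => [|i _]; last by apply: G_right; lia.
by rewrite (@wsum_const _ _ _ al) ?mulrnBl // => i i_lt; apply: G_left; lia.
Qed.

Lemma wsum_step_shift lo1 lo2 N :
  lo1 <= L -> lo2 <= L -> U <= lo1 + N%:Z -> U <= lo2 + N%:Z ->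
  wsum G lo2 N - wsum G lo1 N = (be - al) *~ (lo2 - lo1).
Proof.
wlog le12 : lo1 lo2 / lo1 <= lo2 => [wlog_le L1 L2 U1 U2|L1 L2 U1 U2].
  have [/wlog_le -> //|/ltW le21] := lerP lo1 lo2.
  by rewrite -[LHS]opprB wlog_le // -mulrNz opprB.
have -> : lo2 = lo1 + (absz (lo2 - lo1))%:Z by lia.
rewrite wsum_step_shiftn; [|lia..].
by rewrite (addrC lo1) addrK pmulrn.
Qed.

End StepFunction.
End WindowSum.

Section DiscreteAngle.
Variable K : realFieldType.
Implicit Types u v : K * K.

Lemma dang_opp u v : dang (- v.1, - v.2) (- u.1, - u.2) = - dang u v.
Proof.
rewrite /dang /= !sgrN.
have -> : - v.1 * - u.2 - - v.2 * - u.1 = - (u.1 * v.2 - u.2 * v.1) by ring.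
by rewrite sgrN opprK addrC mulrN.
Qed.

Lemma dang_sg_eq u v : Num.sg u.1 = Num.sg v.1 -> dang u v = 0.
Proof. by move=> e; rewrite /dang e subrr normr0 mulr0 mul0r. Qed.

Lemma dang_upper u v : 0 < u.2 -> 0 < v.2 ->
  dang u v = - 4^-1 * (Num.sg v.1 - Num.sg u.1).
Proof.
case: u v => [u1 u2] [v1 v2] /= u2_gt0 v2_gt0; rewrite /dang /=.
(* Once [u1] and [v1] differ in sign, both terms of the cross product
   have the sign of [u1 - v1]. *)
case: (ltrgt0P u1) => u1_sg; case: (ltrgt0P v1) => v1_sg;
  rewrite ?(gtr0_sg u1_sg) ?(ltr0_sg u1_sg) ?(gtr0_sg v1_sg) ?(ltr0_sg v1_sg)
          ?u1_sg ?v1_sg ?sgr0 ?subrr ?normr0 ?mulr0 ?mul0r //;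
  first [ rewrite (@ltr0_sg _ (_ - _)); last by nra
        | rewrite (@gtr0_sg _ (_ - _)); last by nra ];
  first [ rewrite ger0_norm; last by lra | rewrite ler0_norm; last by lra ];
  by field.
Qed.

Lemma dang_lower u v : u.2 < 0 -> v.2 < 0 ->
  dang u v = 4^-1 * (Num.sg v.1 - Num.sg u.1).
Proof.
case: u v => [u1 u2] [v1 v2] /= u2_lt0 v2_lt0.
have := @dang_upper (u1, - u2) (v1, - v2); rewrite /dang /= !oppr_gt0 => /(_ u2_lt0 v2_lt0).
have -> : u1 * - v2 - - u2 * v1 = - (u1 * v2 - u2 * v1) by ring.
by rewrite sgrN mulrN mulNr => /oppr_inj.
Qed.

End DiscreteAngle.

Lemma big_sym_range (V : zmodType) (f : int -> V) M :
  \sum_(x <- sym_range M) f x = wsum f (- M%:Z) (2 * M).+1.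
Proof.
by rewrite big_map [iota _ _](_ : _ = index_iota 0 (2 * M).+1) ?big_mkord // /index_iota subn0.
Qed.

Lemma big_box (V : zmodType) (F : int * int -> V) M :
  \sum_(q <- box M) F q =
  wsum (fun x => wsum (fun y => F (x, y)) (- M%:Z) (2 * M).+1) (- M%:Z) (2 * M).+1.
Proof. by rewrite big_allpairs big_sym_range; apply: eq_bigr => i _; rewrite big_sym_range. Qed.

Section EdgeDang.
Variable K : realFieldType.
Implicit Types (a b q : int * int) (c t : int).

Definition edge_dang a b q : K := dang (toK K (subZ2 a q)) (toK K (subZ2 b q)).

Definition column_jump a b c : K :=
  Num.sg ((b.1 - c)%:~R : K) - Num.sg ((a.1 - c)%:~R : K).

Lemma edge_dang_reflect a b c t :
  edge_dang a b (a.1 + b.1 - c, a.2 + b.2 - t) = - edge_dang a b (c, t).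
Proof.
rewrite /edge_dang -dang_opp /toK /subZ2 /=.
by congr (dang (_, _) (_, _)); rewrite -intrN; congr (_%:~R); ring.
Qed.

Lemma edge_dang_outside a b c t : c < a.1 /\ c < b.1 \/ a.1 < c /\ b.1 < c ->
  edge_dang a b (c, t) = 0.
Proof.
move=> ab_c; apply: dang_sg_eq => /=.
case: ab_c => [[ac bc]|[ac bc]]; first by rewrite !gtr0_sg // ltr0z subr_gt0.
by rewrite !ltr0_sg // ltrz0 subr_lt0.
Qed.

Lemma edge_dang_below a b c t : t < a.2 -> t < b.2 ->
  edge_dang a b (c, t) = - 4^-1 * column_jump a b c.
Proof. by move=> lt_a lt_b; rewrite /edge_dang dang_upper //= ltr0z subr_gt0. Qed.

Lemma edge_dang_above a b c t : a.2 < t -> b.2 < t ->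
  edge_dang a b (c, t) = 4^-1 * column_jump a b c.
Proof. by move=> a_lt b_lt; rewrite /edge_dang dang_lower //= ltrz0 subr_lt0. Qed.

Lemma wsum_column_jump a b lo N :
  lo <= a.1 -> lo <= b.1 -> a.1 < lo + N%:Z -> b.1 < lo + N%:Z ->
  wsum (column_jump a b) lo N = 2 * (b.1 - a.1)%:~R.
Proof.
move=> la lb aN bN; pose h t := Num.sg ((- t)%:~R : K).
have -> : wsum (column_jump a b) lo N = wsum h (lo - b.1) N - wsum h (lo - a.1) N.
  rewrite -!wsum_translate /wsum -sumrB; apply: eq_bigr => i _.
  by rewrite /h /column_jump; congr (Num.sg _ - Num.sg _); congr (_%:~R); ring.
have h_left t : t < 0 -> h t = 1 by move=> t_lt0; rewrite /h gtr0_sg // ltr0z oppr_gt0.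
have h_right t : 1 <= t -> h t = -1 by move=> t_ge1; rewrite /h ltr0_sg // ltrz0 oppr_lt0; lia.
rewrite (wsum_step_shift h_left h_right); [|lia..].
by rewrite -mulrzl; ring.
Qed.

End EdgeDang.

Section EdgeInBox.
Variables (K : realFieldType) (a b : int * int) (R : nat).
Hypotheses (a_in : a \in box R) (b_in : b \in box R).

Let bounds : [/\ `|a.1| <= R%:Z, `|a.2| <= R%:Z, `|b.1| <= R%:Z & `|b.2| <= R%:Z].
Proof. by move: a_in b_in; rewrite !mem_box => /andP[? ?] /andP[? ?]. Qed.

Lemma edge_dang_far_column c t : R%:Z < `|c| -> edge_dang K a b (c, t) = 0.
Proof. by have [? ? ? ?] := bounds; move=> cR; apply: edge_dang_outside; lia. Qed.

Lemma edge_dang_far_below c t : t < - R%:Z ->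
  edge_dang K a b (c, t) = - 4^-1 * column_jump K a b c.
Proof. by have [? ? ? ?] := bounds; move=> tR; apply: edge_dang_below; lia. Qed.

Lemma edge_dang_far_above c t : R%:Z < t ->
  edge_dang K a b (c, t) = 4^-1 * column_jump K a b c.
Proof. by have [? ? ? ?] := bounds; move=> tR; apply: edge_dang_above; lia. Qed.

Variable M : nat.
Hypothesis RM : (3 * R <= M)%N.

Local Notation N := (2 * M).+1.
Local Notation column c := (fun t => edge_dang K a b (c, t)).
Let col c := wsum (column c) (- M%:Z) N.

Lemma wsum_col_shift : wsum col (a.1 + b.1 - M%:Z) N = wsum col (- M%:Z) N.
Proof.
have [? ? ? ?] := bounds.
have col_left c : c < - R%:Z -> col c = 0.
  by move=> cR; apply: big1 => i _; apply: edge_dang_far_column; lia.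
have col_right c : R%:Z + 1 <= c -> col c = 0.
  by move=> cR; apply: big1 => i _; apply: edge_dang_far_column; lia.
by apply/eqP; rewrite -subr_eq0 (wsum_step_shift col_left col_right) ?subrr ?mul0rz //; lia.
Qed.

Lemma col_add_col_reflect c :
  col c + col (a.1 + b.1 - c) = - ((a.2 + b.2)%:~R * 2^-1 * column_jump K a b c).
Proof.
have [? ? ? ?] := bounds.
have reflect_col : col (a.1 + b.1 - c) = - wsum (column c) (a.2 + b.2 - M%:Z) N.
  have -> : a.2 + b.2 - M%:Z = a.2 + b.2 - (- M%:Z) - (2 * M)%N%:Z by lia.
  rewrite -wsum_rev -wsumN /col; apply: eq_bigr => i _.
  by rewrite -edge_dang_reflect; congr edge_dang; congr pair; ring.
have above t : R%:Z + 1 <= t -> column c t = 4^-1 * column_jump K a b c.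
  by move=> tR; apply: edge_dang_far_above; lia.
rewrite reflect_col -opprB (wsum_step_shift (edge_dang_far_below c) above); [|lia..].
by rewrite -mulrzl (opprK (M%:Z)) subrK; field.
Qed.

Lemma box_sum_edge_dang : \sum_(q <- box M) edge_dang K a b q = area (toK K a) (toK K b).
Proof.
have [? ? ? ?] := bounds.
rewrite big_box -/(col _); apply: (@mulfI _ 2); first by rewrite pnatr_eq0.
have -> : 2 * wsum col (- M%:Z) N =
          wsum col (- M%:Z) N + wsum (fun c => col (a.1 + b.1 - c)) (- M%:Z) N.
  by rewrite wsum_rev (_ : _ - _ - _ = a.1 + b.1 - M%:Z) ?wsum_col_shift; [ring|lia].
rewrite -wsumD (eq_wsum _ _ col_add_col_reflect) wsumN /wsum -mulr_sumr -/(wsum _ _ _).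
rewrite wsum_column_jump; [|lia..].
by rewrite /area /toK /= !intrD intrN; field.
Qed.

End EdgeInBox.

Lemma polygon_in_box (p : nat -> int * int) n :
  exists R, forall i, (i <= n)%N -> p i \in box R.
Proof.
pose r (j : 'I_n.+1) := maxn `|(p j).1|%N `|(p j).2|%N.
exists (\max_j r j) => i i_le.
by have := @leq_bigmax _ r (Ordinal (i_le : (i < n.+1)%N)); rewrite /r mem_box /=; lia.
Qed.

Section Polygon.
Variables (K : realFieldType) (p : nat -> int * int) (n R : nat).
Hypothesis p_in : forall i, (i <= n)%N -> p i \in box R.

Let edge_in i : (1 <= i < n.+1)%N -> p i.-1 \in box R /\ p i \in box R.
Proof. by move=> /andP[i_ge1 i_le]; split; apply: p_in; lia. Qed.

Lemma Area_box_sum M : (3 * R <= M)%N -> Area K p n = \sum_(q <- box M) Dang K p n q.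
Proof.
move=> RM; rewrite /Area /Dang [RHS]exchange_big; apply: eq_big_nat => i /edge_in[a_in b_in].
by rewrite (box_sum_edge_dang K a_in b_in RM).
Qed.

Lemma sum_closed_jumps (g : nat -> K) k : g n = g 0%N ->
  \sum_(1 <= i < n.+1) k * (g i - g i.-1) = 0.
Proof.
by move=> g_closed; rewrite -mulr_sumr big_add1 /= telescope_sumr // g_closed subrr mulr0.
Qed.

Hypothesis p_closed : p n = p 0%N.

Lemma Dang_eq0_outside_box (c t : int) : (c, t) \notin box R -> Dang K p n (c, t) = 0.
Proof.
rewrite mem_box /= => /nandP[c_out|t_out].
  apply: big1_seq => i; rewrite mem_index_iota => /edge_in[a_in b_in].
  by apply: (edge_dang_far_column K a_in b_in); lia.
pose g i := Num.sg (((p i).1 - c)%:~R : K).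
have [k jumps] : exists k : K, forall i, (1 <= i < n.+1)%N ->
    edge_dang K (p i.-1) (p i) (c, t) = k * (g i - g i.-1).
  have [t_lt|t_gt] : t < - R%:Z \/ R%:Z < t by lia.
  - by exists (- 4^-1) => i /edge_in[a_in b_in]; rewrite (edge_dang_far_below K a_in b_in).
  - by exists 4^-1 => i /edge_in[a_in b_in]; rewrite (edge_dang_far_above K a_in b_in).
by rewrite /Dang (eq_big_nat _ _ jumps) sum_closed_jumps // /g p_closed.
Qed.

End Polygon.

Theorem lemma2p7 (K : realFieldType) (n : nat) (p : nat -> int * int) :
  (1 <= n)%N -> p n = p 0%N ->
  (exists S : seq (int * int), forall q, q \notin S -> Dang K p n q = 0) /\
  (forall S : seq (int * int), uniq S ->
     (forall q, q \notin S -> Dang K p n q = 0) ->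
     Area K p n = \sum_(q <- S) Dang K p n q).
Proof.
move=> _ p_closed; have [R p_in] := polygon_in_box p n.
have Dang_supp q : q \notin box (3 * R) -> Dang K p n q = 0.
  case: q => c t q_out; apply: (Dang_eq0_outside_box K p_in p_closed).
  by apply: contra q_out; rewrite !mem_box /=; lia.
split=> [|S S_uniq S_supp]; first by exists (box (3 * R)).
rewrite (Area_box_sum K p_in (leqnn _)).
exact: big_uniq_supp_eq (box_uniq _) S_uniq Dang_supp S_supp.
Qed.
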